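(* Let $a,b\in\mathbb{M}_2$ with $0\le a,b\le 1$ and $a,b\notin\{0,1\}$, such that $a$ is absolutely compatible with $b$ and $ab=ba$. Then: (a) If $a$ is strict, then there exist $\alpha,\beta\in(0,1)$ and a minimal (rank one) projection $p\in\mathbb{M}_2$ such that $b=p$ and $a=\alpha p+\beta(1-p)$. (b) If $a$ is not strict, then one of the following holds: (b.1) if $e(a)=0$, there exist $\alpha,\beta\in[0,1]$ with $\alpha+\beta>0$ and a minimal projection $p\in\mathbb{M}_2$ such that $a=p$ and $b=\alpha p+\beta(1-p)$; (b.2) if $s(a)\neq0$ and $e(a)\ne0$, there exist $\alpha,\beta\in[0,1]$ and a minimal projection $p\in\mathbb{M}_2$ such that either $a=p+\alpha(1-p)$ and $b=\beta p+(1-p)$ with $\alpha\ne0$, or $a=p+\alpha(1-p)$ and $b=\beta p$ with $\alpha,\beta\ne0$; (b.3) if $n(a)\ne0$ and $e(a)\neq0$, there exist $\alpha,\beta\in[0,1]$ and a minimal projection $p\in\mathbb{M}_2$ such that either $a=\alpha p$ and $b=p+\beta(1-p)$ with $\alpha\ne0$, or $a=\alpha p$ and $b=\beta(1-p)$ with $\alpha,\beta\ne0$.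
   Context: $\mathbb{M}_2$ is the algebra of $2\times2$ complex matrices. For $x$ in it, $|x|=(x^*x)^{1/2}$. Elements $0\le a,b\le 1$ are absolutely compatible if $|a-b|+|1-a-b|=1$. For positive $x$, $r(x)$ is the range projection. For $0\le a\le1$: $s(a)=1-r(1-a)$ (support projection), $e(a)=a-s(a)$, $n(a)=1-r(a)$; a non-zero $0\le a\le 1$ is strict if $s(a)=0=n(a)$. *)

From HB Require Import structures.
From mathcomp Require Import all_boot all_order all_algebra.
From mathcomp Require Import complex.
From mathcomp Require Import reals.
From Stdlib Require Import ClassicalEpsilon.
Set Implicit Arguments. Unset Strict Implicit. Unset Printing Implicit Defensive.
Import Order.TTheory GRing.Theory Num.Theory.
Local Open Scope ring_scope.

Section M2.
Variable R : realType.
Local Notation C := (R[i]).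
Local Notation M2 := ('M[C]_2).

Definition adj (x : M2) : M2 := map_mx Num.conj x^T.

Definition mpos (x : M2) : Prop :=
  adj x = x /\ forall v : 'cV[C]_2, 0 <= ((map_mx Num.conj v^T) *m x *m v) 0 0.

Definition mle (x y : M2) : Prop := mpos (y - x).

Definition is_proj (p : M2) : Prop := p *m p = p /\ adj p = p.

Definition minproj (p : M2) : Prop := is_proj p /\ \rank p = 1%N.

Definition mabs (x : M2) : M2 :=
  epsilon (inhabits 0) (fun y : M2 => mpos y /\ y *m y = adj x *m x).

(* range projection: the projection p whose range (column space) equals
   that of x, i.e. p x = x and p = x y for some y *)
Definition is_range_proj (x p : M2) : Prop :=
  is_proj p /\ p *m x = x /\ exists y : M2, x *m y = p.

Definition rproj (x : M2) : M2 := epsilon (inhabits 0) (is_range_proj x).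

Definition supp (a : M2) : M2 := 1 - rproj (1 - a).
Definition epart (a : M2) : M2 := a - supp a.
Definition npart (a : M2) : M2 := 1 - rproj a.

Definition strict (a : M2) : Prop := a <> 0 /\ supp a = 0 /\ npart a = 0.

Definition abs_compatible (a b : M2) : Prop :=
  mabs (a - b) + mabs (1 - a - b) = 1.

End M2.

(* Commuting self-adjoint 2x2 matrices are simultaneously diagonal:
   a = x1 p + x2 (1 - p) and b = y1 p + y2 (1 - p) for a rank-one projection p.
   The operator order, the modulus, range projections and hence s, e, n are then
   computed eigenvalue-wise.  Absolute compatibility forces |a - b| = a + b - 2ab,
   whose square equals (a - b)^2 only if x y (1 - x) (1 - y) = 0 for each pair of
   eigenvalues (x, y): on each eigenspace, a or b is 0 or 1.  The four cases are
   then bookkeeping on the eigenvalues, up to exchanging p and 1 - p. *)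

From HB Require Import structures.
From mathcomp Require Import all_boot all_order all_algebra.
From mathcomp Require Import complex.
From mathcomp Require Import reals.
From mathcomp Require Import ring.
From Stdlib Require Import ClassicalEpsilon.
Import Order.TTheory GRing.Theory Num.Theory.
Set Implicit Arguments. Unset Strict Implicit. Unset Printing Implicit Defensive.
Local Open Scope ring_scope.

Section TwoByTwo.
Variable R : realType.
Local Notation C := (R[i]).
Local Notation M2 := ('M[C]_2).
Implicit Types (p q x y a b : M2) (c d : C).

Local Notation i0 := (ord0 : 'I_2).
Local Notation i1 := (lift ord0 ord0 : 'I_2).

Lemma ord2P (i : 'I_2) : i = i0 \/ i = i1.
Proof. by case: i => [[|[|//]] ?]; [left | right]; apply: val_inj. Qed.

Lemma mx2_eq (A B : M2) :
  A i0 i0 = B i0 i0 -> A i0 i1 = B i0 i1 -> A i1 i0 = B i1 i0 -> A i1 i1 = B i1 i1 ->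
  A = B.
Proof.
move=> h00 h01 h10 h11; apply/matrixP => i j.
by case: (ord2P i) => ->; case: (ord2P j) => ->.
Qed.

Ltac mx2_entries := apply: mx2_eq; rewrite !(mxE, big_ord_recl, big_ord0) /=.

Lemma cayley_hamilton2_polar (m n : M2) :
  m *m n + n *m m - \tr m *: n - \tr n *: m + (\tr m * \tr n - \tr (m *m n))%:M = 0.
Proof. rewrite /mxtrace; mx2_entries; ring. Qed.

Lemma adjM x y : adj (x *m y) = adj y *m adj x.
Proof. by rewrite /adj trmx_mul map_mxM. Qed.
Lemma adjD x y : adj (x + y) = adj x + adj y.
Proof. by rewrite /adj linearD map_mxD. Qed.
Lemma adjN x : adj (- x) = - adj x.
Proof. by rewrite /adj linearN map_mxN. Qed.
Lemma adjB x y : adj (x - y) = adj x - adj y.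
Proof. by rewrite adjD adjN. Qed.
Lemma adjZ c x : adj (c *: x) = c^* *: adj x.
Proof. by rewrite /adj linearZ map_mxZ. Qed.
Lemma adj1 : adj (1 : M2) = 1.
Proof. by rewrite /adj trmx1 map_mx1. Qed.
Lemma adj_scalar c : adj c%:M = c^*%:M.
Proof. by rewrite -scalemx1 adjZ adj1 scalemx1. Qed.
Lemma adjK x : adj (adj x) = x.
Proof. by rewrite /adj map_trmx trmxK -map_mx_comp map_mx_id // => c /=; rewrite conjCK. Qed.

Definition pdiag (p : M2) (c d : C) : M2 := c *: p + d *: (1 - p).

Lemma pdiagD p c d c' d' : pdiag p c d + pdiag p c' d' = pdiag p (c + c') (d + d').
Proof. by rewrite /pdiag !scalerDl addrACA. Qed.
Lemma pdiagN p c d : - pdiag p c d = pdiag p (- c) (- d).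
Proof. by rewrite /pdiag opprD !scaleNr. Qed.
Lemma pdiagB p c d c' d' : pdiag p c d - pdiag p c' d' = pdiag p (c - c') (d - d').
Proof. by rewrite pdiagN pdiagD. Qed.
Lemma pdiagZ p k c d : k *: pdiag p c d = pdiag p (k * c) (k * d).
Proof. by rewrite /pdiag scalerDr !scalerA. Qed.
Lemma pdiag_scalar p c : pdiag p c c = c%:M.
Proof. by rewrite /pdiag -scalerDr addrC subrK scalemx1. Qed.
Lemma pdiag11 p : pdiag p 1 1 = 1.
Proof. exact: pdiag_scalar. Qed.
Lemma pdiag00 p : pdiag p 0 0 = 0.
Proof. by rewrite /pdiag !scale0r addr0. Qed.
Lemma pdiagC p c d : pdiag p c d = pdiag (1 - p) d c.
Proof. by rewrite /pdiag subKr addrC. Qed.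
Lemma pdiag_affine p c d : pdiag p c d = (c - d) *: p + d%:M.
Proof. by rewrite /pdiag scalerBl scalerBr addrA addrAC scalemx1. Qed.
Lemma pdiag1l p d : pdiag p 1 d = p + d *: (1 - p).
Proof. by rewrite /pdiag scale1r. Qed.
Lemma pdiag1r p c : pdiag p c 1 = c *: p + (1 - p).
Proof. by rewrite /pdiag scale1r. Qed.
Lemma pdiag0l p d : pdiag p 0 d = d *: (1 - p).
Proof. by rewrite /pdiag scale0r add0r. Qed.
Lemma pdiag0r p c : pdiag p c 0 = c *: p.
Proof. by rewrite /pdiag scale0r addr0. Qed.
Lemma adj_pdiag p c d : adj p = p -> adj (pdiag p c d) = pdiag p c^* d^*.
Proof. by move=> pa; rewrite /pdiag adjD !adjZ adjB adj1 pa. Qed.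

Section Idempotent.
Variable p : M2.
Hypothesis pp : p *m p = p.

Lemma mulmx_proj_compl : p *m (1 - p) = 0.
Proof. by rewrite mulmxBr mulmx1 pp subrr. Qed.
Lemma mulmx_compl_proj : (1 - p) *m p = 0.
Proof. by rewrite mulmxBl mul1mx pp subrr. Qed.
Lemma compl_idem : (1 - p) *m (1 - p) = 1 - p.
Proof. by rewrite mulmxBl mul1mx mulmx_proj_compl subr0. Qed.

Lemma pdiagM c d c' d' : pdiag p c d *m pdiag p c' d' = pdiag p (c * c') (d * d').
Proof.
rewrite /pdiag mulmxDl !mulmxDr -!scalemxAl -!scalemxAr pp compl_idem.
by rewrite mulmx_proj_compl mulmx_compl_proj !scaler0 addr0 add0r !scalerA.
Qed.

Lemma pdiagMp c d : pdiag p c d *m p = c *: p.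
Proof. by rewrite /pdiag mulmxDl -!scalemxAl pp mulmx_compl_proj scaler0 addr0. Qed.

Lemma pdiag_inj c d c' d' : p != 0 -> p != 1 ->
  pdiag p c d = pdiag p c' d' -> c = c' /\ d = d'.
Proof.
move=> p0 p1 e; split.
  move/eqP: (pdiagMp c d); rewrite e pdiagMp -subr_eq0 -scalerBl scaler_eq0.
  by rewrite (negbTE p0) orbF subr_eq0 eq_sym => /eqP.
have q0 : 1 - p != 0 by rewrite subr_eq0 eq_sym.
move/eqP: (congr1 (mulmx^~ (1 - p)) e) => /=.
rewrite /pdiag !mulmxDl -!scalemxAl mulmx_proj_compl compl_idem !scaler0 !add0r.
by rewrite -subr_eq0 -scalerBl scaler_eq0 (negbTE q0) orbF subr_eq0 => /eqP.
Qed.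

Lemma pdiag_eq c d c' d' : p != 0 -> p != 1 ->
  (pdiag p c d == pdiag p c' d') = (c == c') && (d == d').
Proof.
move=> p0 p1; apply/eqP/andP => [/(pdiag_inj p0 p1) [-> ->] // | [/eqP-> /eqP->] //].
Qed.

Lemma pdiag_eq0 c d : p != 0 -> p != 1 -> (pdiag p c d == 0) = (c == 0) && (d == 0).
Proof. by move=> p0 p1; rewrite -(pdiag00 p) pdiag_eq. Qed.

Lemma pdiag_eq1 c d : p != 0 -> p != 1 -> (pdiag p c d == 1) = (c == 1) && (d == 1).
Proof. by move=> p0 p1; rewrite -(pdiag11 p) pdiag_eq. Qed.

End Idempotent.

Lemma is_proj_compl p : is_proj p -> is_proj (1 - p).
Proof. by case=> pp pa; split; [exact: compl_idem | rewrite adjB adj1 pa]. Qed.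

Lemma minprojP p : minproj p <-> [/\ is_proj p, p != 0 & p != 1].
Proof.
split=> [[pr r1] | [[pp pa] p0 p1]].
  by split=> //; apply/eqP=> e; move: r1; rewrite e ?mxrank0 ?mxrank1.
split=> //; have : (\rank p <= 2)%N := rank_leq_row p.
have : \rank p != 0%N by rewrite mxrank_eq0.
have : \rank p != 2%N.
  apply/eqP=> r2; have pu : p \in unitmx by rewrite -row_free_unit /row_free r2.
  have := congr1 (mulmx (invmx p)) pp; rewrite mulmxA mulVmx // mul1mx => e.
  by rewrite e eqxx in p1.
by case: (\rank p) => [|[|[|]]].
Qed.

Lemma minproj_compl p : minproj p -> minproj (1 - p).
Proof.
case/minprojP=> pr p0 p1; apply/minprojP; split; first exact: is_proj_compl.
  by rewrite subr_eq0 eq_sym.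
by apply: contraNneq p0 => e; rewrite -(subKr 1 p) e subrr.
Qed.

Local Notation cj := (map_mx Num.conj).

Lemma cnorm_ge0 (u : 'cV[C]_2) : 0 <= (cj u^T *m u) 0 0.
Proof. by rewrite mxE sumr_ge0 // => k _; rewrite !mxE mulrC mul_conjC_ge0. Qed.

Lemma cnorm_gt0 (u : 'cV[C]_2) : u != 0 -> 0 < (cj u^T *m u) 0 0.
Proof.
move=> u0; rewrite lt0r cnorm_ge0 andbT; apply: contra u0.
rewrite mxE psumr_eq0 => [/allP nu|k _]; last by rewrite !mxE mulrC mul_conjC_ge0.
apply/eqP/matrixP => k j; rewrite (ord1 j) !mxE.
by have := nu k (mem_index_enum k); rewrite !mxE /= mulrC mul_conjC_eq0 => /eqP.
Qed.

Lemma mpos_adjMx x : mpos (adj x *m x).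
Proof.
split; first by rewrite adjM adjK.
move=> v; have -> : cj v^T *m (adj x *m x) *m v = cj (x *m v)^T *m (x *m v).
  by rewrite trmx_mul map_mxM /adj !mulmxA.
exact: cnorm_ge0.
Qed.

Lemma mposD x y : mpos x -> mpos y -> mpos (x + y).
Proof.
move=> [xa xv] [ya yv]; split; first by rewrite adjD xa ya.
by move=> v; rewrite mulmxDr mulmxDl mxE addr_ge0.
Qed.

Lemma mposZ c x : 0 <= c -> mpos x -> mpos (c *: x).
Proof.
move=> c0 [xa xv]; split; first by rewrite adjZ xa conj_Creal // ger0_real.
by move=> v; rewrite -scalemxAr -scalemxAl mxE mulr_ge0.
Qed.

Lemma mpos_pdiag p c d : is_proj p -> 0 <= c -> 0 <= d -> mpos (pdiag p c d).
Proof.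
have mpos_proj q : is_proj q -> mpos q.
  by case=> qq qa; rewrite -qq -{1}qa; exact: mpos_adjMx.
move=> pr c0 d0; apply: mposD; apply: mposZ => //; apply: mpos_proj => //.
exact: is_proj_compl.
Qed.

Lemma mpos_pdiag_ge0 p c d : is_proj p -> p != 0 -> mpos (pdiag p c d) -> 0 <= c.
Proof.
case=> pp _ p0 [_ hv].
have [j pj] : exists j, col j p != 0.
  apply/existsP; apply: contraR p0; rewrite negb_exists => /forallP nz.
  apply/eqP/matrixP => i j.
  by have /negPn/eqP/matrixP/(_ i 0) := nz j; rewrite !mxE.
have pv : p *m col j p = col j p by rewrite colE mulmxA pp.
have Mv : pdiag p c d *m col j p = c *: col j p.
  by rewrite -{1}pv mulmxA pdiagMp // -scalemxAl pv.
by have := hv (col j p); rewrite -mulmxA Mv -scalemxAr mxE pmulr_lge0 // cnorm_gt0.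
Qed.

Lemma idempotent_of_roots a c1 c2 : c1 != c2 ->
  (a - c1%:M) *m (a - c2%:M) = 0 ->
  let p := (c1 - c2)^-1 *: (a - c2%:M) in p *m p = p /\ a = pdiag p c1 c2.
Proof.
move=> ne root p; have k0 : c1 - c2 != 0 by rewrite subr_eq0.
have sq : (a - c2%:M) *m (a - c2%:M) = (c1 - c2) *: (a - c2%:M).
  have shift : a - c2%:M = (a - c1%:M) + (c1 - c2)%:M by rewrite raddfB /= addrA subrK.
  by rewrite {1}shift mulmxDl root add0r mul_scalar_mx.
split; first by rewrite /p -scalemxAl -scalemxAr sq !scalerA divfK.
by rewrite pdiag_affine /p scalerA mulfV // scale1r subrK.
Qed.

Lemma selfadjoint_pdiag a : adj a = a ->
  exists p c1 c2, [/\ is_proj p, \tr p = 1 & a = pdiag p c1 c2].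
Proof.
move=> ha; have e i j : (a j i)^* = a i j.
  by have := congr1 (fun m : M2 => m i j) ha; rewrite !mxE.
set r := a i0 i0; set s := a i1 i1; set z := a i0 i1.
have rr : r^* = r by rewrite e.
have sr : s^* = s by rewrite e.
have wz : a i1 i0 = z^* by rewrite e.
have [z0|z0] := eqVneq z 0.
  exists (delta_mx i0 i0), r, s; split.
  - by split; [rewrite mul_delta_mx | rewrite /adj; mx2_entries; rewrite ?rmorph0 ?rmorph1].
  - by rewrite /mxtrace !(mxE, big_ord_recl, big_ord0) /= !addr0.
  - by rewrite /pdiag; mx2_entries; rewrite -/r -/s -/z ?wz ?z0 ?rmorph0; ring.
(* The eigenvalues of a are (r + s +- sqrt disc) / 2. *)
pose disc := (r - s) ^+ 2 + 4 * (z * z^*).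
have disc_gt0 : 0 < disc.
  have rs : (r - s)^* = r - s by rewrite rmorphB /= rr sr.
  apply: ltr_wpDl; first by rewrite expr2 -{2}rs mul_conjC_ge0.
  by rewrite mulr_gt0 ?mul_conjC_gt0 // ltr0n.
pose D := sqrtC disc.
have D2 : D ^+ 2 = disc by rewrite sqrtCK.
have D0 : D != 0 by rewrite sqrtC_eq0 gt_eqF.
have Dr : D^* = D by rewrite conj_Creal // ger0_real // sqrtC_ge0 ltW.
clearbody D.
pose c1 := (r + s + D) / 2; pose c2 := (r + s - D) / 2.
have c12D : c1 - c2 = D by rewrite /c1 /c2; field.
have c12 : c1 != c2 by rewrite -subr_eq0 c12D.
have root : (a - c1%:M) *m (a - c2%:M) = 0.
  have zz : z * z^* = (D ^+ 2 - (r - s) ^+ 2) / 4 by rewrite D2 /disc; field.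
  mx2_entries; rewrite -/r -/s -/z ?wz /c1 /c2 ?mulr1n ?mulr0n ?subr0 ?addr0.
  - by rewrite zz; field.
  - by field.
  - by field.
  - by rewrite mulrC zz; field.
have [pp ->] := idempotent_of_roots c12 root.
exists ((c1 - c2)^-1 *: (a - c2%:M)), c1, c2; split => //.
- have c2r : c2^* = c2 by rewrite /c2 rmorphM rmorphB rmorphD /= rr sr Dr fmorphV rmorph_nat.
  have kr : ((c1 - c2)^-1)^* = (c1 - c2)^-1 by rewrite c12D fmorphV /= Dr.
  by split=> //; rewrite adjZ adjB adj_scalar ha c2r kr.
- have tra : \tr a = r + s by rewrite /mxtrace !big_ord_recl big_ord0 addr0.
  by rewrite mxtraceZ raddfB /= mxtrace_scalar tra c12D /c2; field.
Qed.

Lemma tr1_neq01 p : \tr p = 1 -> p != 0 /\ p != 1.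
Proof.
move=> tp; split; apply: contra_eq_neq tp => ->; rewrite ?mxtrace0 ?mxtrace1.
  by rewrite eq_sym oner_neq0.
by rewrite pnatr_eq1.
Qed.

Lemma mpos_sqrt y : mpos y -> exists z, mpos z /\ z *m z = y.
Proof.
move=> hy; have [p [c [d [pr /tr1_neq01 [p0 p1] ey]]]] := selfadjoint_pdiag hy.1.
have q0 : 1 - p != 0 by rewrite subr_eq0 eq_sym.
rewrite ey in hy; have c0 := mpos_pdiag_ge0 pr p0 hy.
rewrite pdiagC in hy; have d0 := mpos_pdiag_ge0 (is_proj_compl pr) q0 hy.
exists (pdiag p (sqrtC c) (sqrtC d)); split; first by apply: mpos_pdiag; rewrite ?sqrtC_ge0.
by rewrite pdiagM ?pr.1 // -!expr2 !sqrtCK.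
Qed.

Lemma mabsK x : mabs x *m mabs x = adj x *m x.
Proof. by case: (epsilon_spec (inhabits 0) _ (mpos_sqrt (mpos_adjMx x))). Qed.

Lemma rproj_eq x q : is_range_proj x q -> rproj x = q.
Proof.
have uniq q1 q2 : is_range_proj x q1 -> is_range_proj x q2 -> q1 = q2.
  move=> [[_ a1] [h1 [y1 e1]]] [[_ a2] [h2 [y2 e2]]].
  have m12 : q1 *m q2 = q2 by rewrite -e2 mulmxA h1.
  have m21 : q2 *m q1 = q1 by rewrite -e1 mulmxA h2.
  by rewrite -a2 -m12 adjM a1 a2 m21.
by move=> hq; apply: (uniq _ _ _ hq); apply: epsilon_spec; exists q.
Qed.

Lemma rproj_pdiag p c d : is_proj p ->
  rproj (pdiag p c d) = pdiag p (c != 0)%:R (d != 0)%:R.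
Proof.
move=> [pp pa]; apply: rproj_eq; split; [split | split].
- by rewrite pdiagM // -!natrM !mulnb !andbb.
- by rewrite adj_pdiag // !rmorph_nat.
- by rewrite pdiagM //; congr pdiag; case: eqP => [->|]; rewrite ?mulr0 ?mul1r.
- exists (pdiag p c^-1 d^-1); rewrite pdiagM //.
  by congr pdiag; case: eqP => [->|/eqP h]; rewrite ?mul0r ?mulfV.
Qed.

Lemma supp_pdiag p c d : is_proj p -> supp (pdiag p c d) = pdiag p (c == 1)%:R (d == 1)%:R.
Proof.
move=> pr; rewrite /supp -{1 2}(pdiag11 p) pdiagB rproj_pdiag // pdiagB.
by congr pdiag; rewrite subr_eq0 eq_sym; case: (_ == 1); rewrite ?subr0 ?subrr.
Qed.

Lemma npart_pdiag p c d : is_proj p -> npart (pdiag p c d) = pdiag p (c == 0)%:R (d == 0)%:R.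
Proof.
move=> pr; rewrite /npart rproj_pdiag // -{1}(pdiag11 p) pdiagB.
by congr pdiag; case: (_ == 0); rewrite ?subr0 ?subrr.
Qed.

Lemma epart_pdiag p c d : is_proj p ->
  epart (pdiag p c d) = pdiag p (c - (c == 1)%:R) (d - (d == 1)%:R).
Proof. by move=> pr; rewrite /epart supp_pdiag // pdiagB. Qed.

Section MinimalProjection.
Variable p : M2.
Hypothesis mp : minproj p.

Lemma supp_pdiag_eq0 c d : (supp (pdiag p c d) == 0) = (c != 1) && (d != 1).
Proof.
by case/minprojP: mp => pr p0 p1; rewrite supp_pdiag // pdiag_eq0 ?pr.1 // !pnatr_eq0 !eqb0.
Qed.

Lemma npart_pdiag_eq0 c d : (npart (pdiag p c d) == 0) = (c != 0) && (d != 0).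
Proof.
by case/minprojP: mp => pr p0 p1; rewrite npart_pdiag // pdiag_eq0 ?pr.1 // !pnatr_eq0 !eqb0.
Qed.

Lemma epart_pdiag_eq0 c d :
  (epart (pdiag p c d) == 0) = (c \in [:: 0; 1]) && (d \in [:: 0; 1]).
Proof.
have sub_indicator_eq0 (k : C) : (k - (k == 1)%:R == 0) = (k \in [:: 0; 1]).
  rewrite !inE; case: (eqVneq k 1) => [->|/negPf k1]; rewrite ?eqxx ?k1 /=.
    by rewrite subrr eqxx orbT.
  by rewrite subr0 orbF.
case/minprojP: mp => pr p0 p1.
by rewrite epart_pdiag // pdiag_eq0 ?pr.1 // !sub_indicator_eq0.
Qed.

End MinimalProjection.

Lemma proj_compress q x : q *m q = q -> \tr q = 1 -> q *m x *m q = \tr (q *m x *m q) *: q.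
Proof.
move=> qq tq; set n := q *m x *m q.
have qn : q *m n = n by rewrite /n !mulmxA qq.
have nq : n *m q = n by rewrite /n -mulmxA qq.
have := cayley_hamilton2_polar q n; rewrite qn nq tq mul1r subrr raddf0 addr0 scale1r addrK.
by move/eqP; rewrite subr_eq0 => /eqP.
Qed.

Lemma pdiag_commute p b c d : c != d ->
  pdiag p c d *m b = b *m pdiag p c d -> p *m b = b *m p.
Proof.
move=> cd ab; have cd0 : c - d != 0 by rewrite subr_eq0.
have -> : p = (c - d)^-1 *: (pdiag p c d - d%:M).
  by rewrite pdiag_affine addrK scalerA mulVf // scale1r.
by rewrite -scalemxAl -scalemxAr mulmxBl mulmxBr ab mul_scalar_mx mul_mx_scalar.
Qed.

Lemma proj_commute_split p b : p *m p = p -> p *m b = b *m p ->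
  b = p *m b *m p + (1 - p) *m b *m (1 - p).
Proof.
move=> pp pb; have pbp : p *m b *m p = p *m b by rewrite -mulmxA -pb mulmxA pp.
rewrite !mulmxBl !mul1mx !mulmxBr !mulmx1 pbp -pb.
by rewrite subrr subr0 addrC subrK.
Qed.

Lemma commuting_selfadjoint_pdiag a b : adj a = a -> adj b = b -> a *m b = b *m a ->
  exists p c1 c2 d1 d2, [/\ minproj p, a = pdiag p c1 c2 & b = pdiag p d1 d2].
Proof.
move=> ha hb ab; have [p [c1 [c2 [pr tp ea]]]] := selfadjoint_pdiag ha.
have [c12|c12] := eqVneq c1 c2.
  have [q [d1 [d2 [qr /tr1_neq01 [q0 q1] eb]]]] := selfadjoint_pdiag hb.
  exists q, c1, c1, d1, d2; split=> //; first exact/minprojP.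
  by rewrite ea c12 !pdiag_scalar.
have [[pp _] [p0 p1]] := (pr, tr1_neq01 tp).
have pb : p *m b = b *m p by apply: pdiag_commute c12 _; rewrite -ea.
have tq : \tr (1 - p) = 1.
  by rewrite raddfB /= tp mxtrace1 -[2%:R]/(1 + 1 : C) addrK.
exists p, c1, c2, (\tr (p *m b *m p)), (\tr ((1 - p) *m b *m (1 - p))).
split=> //; first exact/minprojP.
rewrite /pdiag -(proj_compress _ pp tp) -(proj_compress _ (compl_idem pp) tq).
exact: proj_commute_split.
Qed.

Lemma abs_compatible_scalar (x y : C) : (x + y - 2 * x * y) ^+ 2 = (x - y) ^+ 2 ->
  (x \in [:: 0; 1]) || (y \in [:: 0; 1]).
Proof.
move=> e; have : x * (1 - x) * (y * (1 - y)) *+ 4 == 0.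
  by apply/eqP; rewrite -(subrr ((x - y) ^+ 2)) -{1}e; ring.
by rewrite mulrn_eq0 /= !mulf_eq0 !subr_eq0 !inE ![1 == _]eq_sym.
Qed.

Lemma abs_compatible_pdiag p a b (x1 x2 y1 y2 : C) : minproj p -> adj a = a -> adj b = b ->
  a = pdiag p x1 x2 -> b = pdiag p y1 y2 -> abs_compatible a b ->
  (x1 \in [:: 0; 1]) || (y1 \in [:: 0; 1]) /\ (x2 \in [:: 0; 1]) || (y2 \in [:: 0; 1]).
Proof.
case/minprojP=> [[pp _] p0 p1] ha hb ea eb; rewrite /abs_compatible.
set u := mabs (a - b); set w := mabs (1 - a - b) => uw.
have u2 : u *m u = pdiag p ((x1 - y1) ^+ 2) ((x2 - y2) ^+ 2).
  by rewrite mabsK adjB ha hb ea eb pdiagB pdiagM.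
have w2 : w *m w = pdiag p ((1 - x1 - y1) ^+ 2) ((1 - x2 - y2) ^+ 2).
  by rewrite mabsK !adjB adj1 ha hb ea eb -(pdiag11 p) !pdiagB pdiagM.
(* From w = 1 - u: 2 u = 1 + u^2 - w^2 = 1 + (a - b)^2 - (1 - a - b)^2 = 2 (a + b - 2 a b). *)
have u_pdiag : u = pdiag p (x1 + y1 - 2 * x1 * y1) (x2 + y2 - 2 * x2 * y2).
  have wE : w = 1 - u by rewrite -uw addrC addKr.
  have : u *+ 2 = 1 + u *m u - w *m w.
    rewrite wE mulmxBl mul1mx mulmxBr mulmx1.
    by move: (u *m u) => v; mx2_entries; ring.
  rewrite u2 w2 -(pdiag11 p) pdiagD pdiagB -scaler_nat => /(congr1 ( *:%R 2^-1)).
  rewrite scalerA mulVf ?pnatr_eq0 // scale1r pdiagZ => ->.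
  by congr pdiag; field.
move: u2; rewrite u_pdiag pdiagM // => /eqP; rewrite pdiag_eq // -!expr2.
by case/andP=> /eqP/abs_compatible_scalar-> /eqP/abs_compatible_scalar->.
Qed.

End TwoByTwo.

Local Open Scope complex_scope.

Section Classification.
Variable R : realType.
Local Notation C := (R[i]).
Local Notation M2 := ('M[C]_2).
Implicit Types (p a b : M2) (x y : R).

(* Nonnegative complex numbers are real in the order of R[i]. *)
Lemma complex_unit_interval (c : C) : 0 <= c <= 1 -> exists2 x, c = x%:C & 0 <= x <= 1.
Proof.
case/andP=> c0 c1; have cE : c = (complex.Re c)%:C by rewrite RRe_real // ger0_real.
by exists (complex.Re c); rewrite // -ler0c -lecR -cE c0.
Qed.

Lemma realc_in01 x : (x%:C \in [:: 0; 1]) = (x \in [:: 0; 1]).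
Proof. by rewrite !inE fmorph_eq0 fmorph_eq1. Qed.

Lemma unit_interior x : 0 <= x <= 1 -> x \notin [:: 0; 1] -> 0 < x < 1.
Proof.
by case/andP=> x0 x1; rewrite !inE negb_or => /andP[n0 n1]; rewrite lt0r n0 x0 lt_neqAle n1.
Qed.

Lemma bit_pair_cases y1 y2 : y1 \in [:: 0; 1] -> y2 \in [:: 0; 1] ->
  (y1 != 0) || (y2 != 0) -> (y1 != 1) || (y2 != 1) ->
  (y1 = 1 /\ y2 = 0) \/ (y1 = 0 /\ y2 = 1).
Proof. by rewrite !inE => /orP[]/eqP-> /orP[]/eqP->; rewrite ?eqxx ?oner_eq0; auto. Qed.

Inductive compatible_spectra x1 x2 y1 y2 : Prop := CompatibleSpectra of
  0 <= x1 <= 1 & 0 <= x2 <= 1 & 0 <= y1 <= 1 & 0 <= y2 <= 1 &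
  (x1 \in [:: 0; 1]) || (y1 \in [:: 0; 1]) & (x2 \in [:: 0; 1]) || (y2 \in [:: 0; 1]) &
  (x1 != 0) || (x2 != 0) & (x1 != 1) || (x2 != 1) &
  (y1 != 0) || (y2 != 0) & (y1 != 1) || (y2 != 1).

Lemma compatible_spectraC x1 x2 y1 y2 :
  compatible_spectra x1 x2 y1 y2 -> compatible_spectra x2 x1 y2 y1.
Proof. by case=> *; constructor; rewrite // orbC. Qed.

Lemma pdiag_unit_interval p (c d : C) : minproj p ->
  mle 0 (pdiag p c d) -> mle (pdiag p c d) 1 ->
  exists x1 x2, [/\ c = x1%:C, d = x2%:C, 0 <= x1 <= 1 & 0 <= x2 <= 1].
Proof.
case/minprojP=> pr p0 p1; rewrite /mle subr0 -(pdiag11 p) pdiagB => h0 h1.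
have q0 : 1 - p != 0 by rewrite subr_eq0 eq_sym.
have c01 : 0 <= c <= 1 by rewrite (mpos_pdiag_ge0 pr p0 h0) -subr_ge0 (mpos_pdiag_ge0 pr p0 h1).
rewrite pdiagC in h0; rewrite pdiagC in h1; have prC := is_proj_compl pr.
have d01 : 0 <= d <= 1 by rewrite (mpos_pdiag_ge0 prC q0 h0) -subr_ge0 (mpos_pdiag_ge0 prC q0 h1).
have [x1 -> ?] := complex_unit_interval c01; have [x2 -> ?] := complex_unit_interval d01.
by exists x1, x2.
Qed.

Lemma spectral_decomposition a b :
  mle 0 a -> mle a 1 -> mle 0 b -> mle b 1 -> a <> 0 -> a <> 1 -> b <> 0 -> b <> 1 ->
  abs_compatible a b -> a *m b = b *m a ->
  exists p x1 x2 y1 y2, [/\ minproj p, a = pdiag p x1%:C x2%:C, b = pdiag p y1%:C y2%:C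
                          & compatible_spectra x1 x2 y1 y2].
Proof.
move=> ha0 ha1 hb0 hb1 a0 a1 b0 b1 hab ab.
have [sa sb] : adj a = a /\ adj b = b by move: ha0 hb0; rewrite /mle !subr0 => -[? _] [? _].
have [p [c1 [c2 [d1 [d2 [mp ea eb]]]]]] := commuting_selfadjoint_pdiag sa sb ab.
have [cmp1 cmp2] := abs_compatible_pdiag mp sa sb ea eb hab.
subst a b; move: cmp1 cmp2 a0 a1 b0 b1.
have [x1 [x2 [-> -> hx1 hx2]]] := pdiag_unit_interval mp ha0 ha1.
have [y1 [y2 [-> -> hy1 hy2]]] := pdiag_unit_interval mp hb0 hb1.
clear ha0 ha1 hb0 hb1 sa sb hab ab; case/minprojP: (mp) => [[pp _] p0 p1].
rewrite !realc_in01 => cmp1 cmp2 /eqP a0 /eqP a1 /eqP b0 /eqP b1.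
rewrite pdiag_eq0 // !fmorph_eq0 negb_and in a0; rewrite pdiag_eq0 // !fmorph_eq0 negb_and in b0.
rewrite pdiag_eq1 // !fmorph_eq1 negb_and in a1; rewrite pdiag_eq1 // !fmorph_eq1 negb_and in b1.
by exists p, x1, x2, y1, y2; split; last exact: CompatibleSpectra.
Qed.

Definition strict_normal_form a b : Prop :=
  exists (alpha beta : R) p,
    [/\ 0 < alpha < 1, 0 < beta < 1, minproj p, b = p & a = alpha%:C *: p + beta%:C *: (1 - p)].

Definition projection_normal_form a b : Prop :=
  exists (alpha beta : R) p,
    [/\ 0 <= alpha <= 1, 0 <= beta <= 1, 0 < alpha + beta, minproj p &
        a = p /\ b = alpha%:C *: p + beta%:C *: (1 - p)].

Definition support_normal_form a b : Prop :=
  exists (alpha beta : R) p,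
    [/\ 0 <= alpha <= 1, 0 <= beta <= 1, minproj p &
        ([/\ a = p + alpha%:C *: (1 - p), b = beta%:C *: p + (1 - p) & alpha <> 0] \/
         [/\ a = p + alpha%:C *: (1 - p), b = beta%:C *: p, alpha <> 0 & beta <> 0])].

Definition null_normal_form a b : Prop :=
  exists (alpha beta : R) p,
    [/\ 0 <= alpha <= 1, 0 <= beta <= 1, minproj p &
        ([/\ a = alpha%:C *: p, b = p + beta%:C *: (1 - p) & alpha <> 0] \/
         [/\ a = alpha%:C *: p, b = beta%:C *: (1 - p), alpha <> 0 & beta <> 0])].

Lemma strict_case p x1 x2 y1 y2 : minproj p -> compatible_spectra x1 x2 y1 y2 ->
  strict (pdiag p x1%:C x2%:C) ->
  strict_normal_form (pdiag p x1%:C x2%:C) (pdiag p y1%:C y2%:C).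
Proof.
move=> mp [hx1 hx2 _ _ cmp1 cmp2 _ _ y0 y1'] [_ [/eqP s0 /eqP n0]].
rewrite supp_pdiag_eq0 // !fmorph_eq1 in s0; rewrite npart_pdiag_eq0 // !fmorph_eq0 in n0.
have x1i : x1 \notin [:: 0; 1] by rewrite !inE negb_or; case/andP: n0 => -> _; case/andP: s0.
have x2i : x2 \notin [:: 0; 1] by rewrite !inE negb_or; case/andP: n0 => _ ->; case/andP: s0.
have y1b : y1 \in [:: 0; 1] by move: cmp1; rewrite (negPf x1i).
have y2b : y2 \in [:: 0; 1] by move: cmp2; rewrite (negPf x2i).
have [ix1 ix2] := (unit_interior hx1 x1i, unit_interior hx2 x2i).
case: (bit_pair_cases y1b y2b y0 y1') => -[-> ->]; rewrite rmorph0 rmorph1.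
  by exists x1, x2, p; rewrite pdiag0r scale1r.
exists x2, x1, (1 - p); split; [done | done | exact: minproj_compl | |].
  by rewrite pdiag0l scale1r.
exact: pdiagC.
Qed.

Lemma projection_case p x1 x2 y1 y2 : minproj p -> compatible_spectra x1 x2 y1 y2 ->
  epart (pdiag p x1%:C x2%:C) = 0 ->
  projection_normal_form (pdiag p x1%:C x2%:C) (pdiag p y1%:C y2%:C).
Proof.
move=> mp [_ _ hy1 hy2 _ _ x0 x1' y0 _] /eqP.
rewrite epart_pdiag_eq0 // !realc_in01 => /andP[x1b x2b].
have sum_gt0 : 0 < y1 + y2.
  case/andP: hy1 => y1g _; case/andP: hy2 => y2g _.
  by rewrite lt0r paddr_eq0 // negb_and y0 addr_ge0.
case: (bit_pair_cases x1b x2b x0 x1') => -[-> ->]; rewrite rmorph0 rmorph1.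
  exists y1, y2, p; split; [done | done | done | done |].
  by split; [rewrite pdiag0r scale1r | done].
exists y2, y1, (1 - p); rewrite addrC; split; [done | done | done | exact: minproj_compl |].
by split; [rewrite pdiag0l scale1r | exact: pdiagC].
Qed.

Lemma support_case p x1 x2 y1 y2 : minproj p -> compatible_spectra x1 x2 y1 y2 ->
  supp (pdiag p x1%:C x2%:C) <> 0 -> epart (pdiag p x1%:C x2%:C) <> 0 ->
  support_normal_form (pdiag p x1%:C x2%:C) (pdiag p y1%:C y2%:C).
Proof.
move=> mp S /eqP s0 /eqP e0.
rewrite supp_pdiag_eq0 // !fmorph_eq1 negb_and !negbK in s0.
rewrite epart_pdiag_eq0 // !realc_in01 in e0.
wlog x1E : p x1 x2 y1 y2 mp S s0 e0 / x1 = 1 => [hwlog|].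
  case/orP: (s0) => /eqP xE; first exact: hwlog.
  rewrite (pdiagC p x1%:C) (pdiagC p y1%:C).
  apply: hwlog xE; [exact: minproj_compl | exact: compatible_spectraC | |].
    by rewrite orbC.
  by rewrite andbC.
case: S => _ hx2 hy1 _ _ cmp2 _ _ y0 _.
have x2i : x2 \notin [:: 0; 1] by apply: contra e0 => x2b; rewrite x1E x2b !inE eqxx orbT.
have y2b : y2 \in [:: 0; 1] by move: cmp2; rewrite (negPf x2i).
have x20 : x2 != 0 by move: x2i; rewrite !inE negb_or => /andP[].
exists x2, y1, p; split; [done | done | done |].
rewrite x1E rmorph1 pdiag1l; rewrite !inE in y2b; case/orP: y2b => /eqP ?; subst y2.
  right; rewrite rmorph0 pdiag0r; split; [done | done | by apply/eqP |].
  by move: y0; rewrite eqxx orbF => /eqP.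
by left; rewrite rmorph1 pdiag1r; split; [done | done | apply/eqP].
Qed.

Lemma null_case p x1 x2 y1 y2 : minproj p -> compatible_spectra x1 x2 y1 y2 ->
  npart (pdiag p x1%:C x2%:C) <> 0 -> epart (pdiag p x1%:C x2%:C) <> 0 ->
  null_normal_form (pdiag p x1%:C x2%:C) (pdiag p y1%:C y2%:C).
Proof.
move=> mp S /eqP n0 /eqP e0.
rewrite npart_pdiag_eq0 // !fmorph_eq0 negb_and !negbK in n0.
rewrite epart_pdiag_eq0 // !realc_in01 in e0.
wlog x2E : p x1 x2 y1 y2 mp S n0 e0 / x2 = 0 => [hwlog|].
  case/orP: (n0) => /eqP xE; last exact: hwlog.
  rewrite (pdiagC p x1%:C) (pdiagC p y1%:C).
  apply: hwlog xE; [exact: minproj_compl | exact: compatible_spectraC | |].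
    by rewrite orbC.
  by rewrite andbC.
case: S => hx1 _ _ hy2 cmp1 _ _ _ y0 _.
have x1i : x1 \notin [:: 0; 1] by apply: contra e0 => x1b; rewrite x2E x1b !inE eqxx.
have y1b : y1 \in [:: 0; 1] by move: cmp1; rewrite (negPf x1i).
have x10 : x1 != 0 by move: x1i; rewrite !inE negb_or => /andP[].
exists x1, y2, p; split; [done | done | done |].
rewrite x2E rmorph0 pdiag0r; rewrite !inE in y1b; case/orP: y1b => /eqP ?; subst y1.
  right; rewrite rmorph0 pdiag0l; split; [done | done | by apply/eqP |].
  by move: y0; rewrite eqxx => /eqP.
by left; rewrite rmorph1 pdiag1l; split; [done | done | apply/eqP].
Qed.

End Classification.

Theorem proposition3p1 (R : realType) (a b : 'M[R[i]]_2) :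
  mle 0 a -> mle a 1 -> mle 0 b -> mle b 1 ->
  a <> 0 -> a <> 1 -> b <> 0 -> b <> 1 ->
  abs_compatible a b -> a *m b = b *m a ->
  (strict a ->
     exists (alpha beta : R) (p : 'M[R[i]]_2),
       [/\ 0 < alpha < 1, 0 < beta < 1, minproj p,
           b = p & a = alpha%:C *: p + beta%:C *: (1 - p)]) /\
  (~ strict a ->
     (epart a = 0 ->
        exists (alpha beta : R) (p : 'M[R[i]]_2),
          [/\ 0 <= alpha <= 1, 0 <= beta <= 1, 0 < alpha + beta, minproj p &
              a = p /\ b = alpha%:C *: p + beta%:C *: (1 - p)]) /\
     (supp a <> 0 -> epart a <> 0 ->
        exists (alpha beta : R) (p : 'M[R[i]]_2),
          [/\ 0 <= alpha <= 1, 0 <= beta <= 1, minproj p &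
              ([/\ a = p + alpha%:C *: (1 - p), b = beta%:C *: p + (1 - p)
                 & alpha <> 0] \/
               [/\ a = p + alpha%:C *: (1 - p), b = beta%:C *: p,
                   alpha <> 0 & beta <> 0])]) /\
     (npart a <> 0 -> epart a <> 0 ->
        exists (alpha beta : R) (p : 'M[R[i]]_2),
          [/\ 0 <= alpha <= 1, 0 <= beta <= 1, minproj p &
              ([/\ a = alpha%:C *: p, b = p + beta%:C *: (1 - p)
                 & alpha <> 0] \/
               [/\ a = alpha%:C *: p, b = beta%:C *: (1 - p),
                   alpha <> 0 & beta <> 0])])).
Proof.
move=> ha0 ha1 hb0 hb1 a0 a1 b0 b1 hab ab.
have [p [x1 [x2 [y1 [y2 [mp -> -> S]]]]]] :=
  spectral_decomposition ha0 ha1 hb0 hb1 a0 a1 b0 b1 hab ab.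
split; first exact: strict_case mp S.
move=> _; split; first exact: projection_case mp S.
by split; [exact: support_case mp S | exact: null_case mp S].
Qed.
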